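(* Let $\#\mathcal A(k)$ denote the number of $\alpha$-trees of length $k$. Then $\#\mathcal A(0)=1$ and for every $k\ge1$ $$\#\mathcal A(k)=\#\mathcal A(k-1)\cdot\sum_{i=0}^{k-1}\#\mathcal A(i).$$ In particular $\#\mathcal A(1)=1$, $\#\mathcal A(2)=2$, $\#\mathcal A(3)=8$, $\#\mathcal A(4)=96$.
   Context: All trees are finite rooted plane trees: the children of each node are linearly ordered (from ''lowest'' to ''highest''), and for two children $a,b$ of the same node, $b$ lies above $a$ if $b$ comes later in this order. The length of a tree is the maximal distance of a node from the root (a single node has length 0). For a node $a$ of $T$, $T(a)$ is the maximal subtree of $T$ with root $a$. An $\alpha$-tree is a rooted plane tree such that whenever two nodes $a,b$ have the same parent and $b$ lies above $a$, the subtree $T(b)$ has strictly smaller length than $T(a)$. Trees are counted up to isomorphism of rooted plane trees. *)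

From Stdlib Require Import List Arith.
Import ListNotations.

(* Finite rooted plane trees up to isomorphism: a node with an ordered list of
   children (from lowest to highest). *)
Inductive tree : Type := Node : list tree -> tree.

(* Length: maximal distance of a node from the root (leaf has length 0). *)
Fixpoint height (t : tree) : nat :=
  match t with
  | Node ts =>
      (fix hs (l : list tree) : nat :=
         match l with
         | [] => 0
         | c :: l' => Nat.max (S (height c)) (hs l')
         end) ts
  end.

Fixpoint siblings_ok (l : list tree) : Prop :=
  match l with
  | [] => True
  | a :: l' => Forall (fun b => height b < height a) l' /\ siblings_ok l'
  end.

Fixpoint alpha_tree (t : tree) : Prop :=
  match t with
  | Node ts =>
      siblings_ok ts /\
      (fix all_alpha (l : list tree) : Prop :=
         match l with
         | [] => True
         | c :: l' => alpha_tree c /\ all_alpha l'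
         end) ts
  end.

(* s is an exact duplicate-free enumeration of the alpha-trees of length k,
   so its size is #A(k). *)
Definition enumerates_alpha (k : nat) (s : list tree) : Prop :=
  NoDup s /\ forall t, In t s <-> (alpha_tree t /\ height t = k).

Definition sum_below (N : nat -> nat) (k : nat) : nat :=
  fold_right Nat.add 0 (map N (seq 0 k)).

From Stdlib Require Import List Arith Lia FinFun.
Import ListNotations.

(* Removing the lowest child [c] of the root of a tree [t] leaves
   a tree [r] (the same root with the remaining children), and conversely
   [t] is recovered by grafting [c] back under the root of [r].  The sibling
   condition at the root says exactly that every other child is shorter than
   [c], i.e. [height r <= height c]; then [height t = S (height c)].  Hence

     alpha-trees of length k+1  <->  alpha-trees c of length k
                                     x alpha-trees r of length <= k,

   so #A(k+1) = #A(k) * (#A(0) + ... + #A(k)).  We make this effective: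
   grafting is injective, so grafting every tree of one duplicate-free list
   under every tree of another yields a duplicate-free list whose length is
   the product. *)

Definition children (t : tree) : list tree := match t with Node l => l end.

Definition graft (c r : tree) : tree := Node (c :: children r).

Lemma graft_inj c r c' r' : graft c r = graft c' r' -> c = c' /\ r = r'.
Proof.
  destruct r as [l], r' as [l']; simpl; intros H; injection H; intros; subst; auto.
Qed.

Lemma height_graft c r : height (graft c r) = Nat.max (S (height c)) (height r).
Proof. destruct r; reflexivity. Qed.

Lemma height_node_le l h :
  height (Node l) <= h <-> Forall (fun b => height b < h) l.
Proof.
  induction l as [|c l IH].
  - split; intros; [constructor | simpl; lia].
  - change (height (Node (c :: l))) with (Nat.max (S (height c)) (height (Node l))).
    rewrite Nat.max_lub_iff, IH. split.
    + intros [Hc Hl]; constructor; [lia | exact Hl].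
    + intros H; inversion H; subst; split; [lia | assumption].
Qed.

Lemma alpha_graft c r :
  alpha_tree (graft c r) <->
  alpha_tree c /\ alpha_tree r /\ height r <= height c.
Proof.
  destruct r as [l]; rewrite height_node_le; cbn [graft children alpha_tree siblings_ok].
  tauto.
Qed.

Lemma alpha_height_0 t : alpha_tree t /\ height t = 0 <-> t = Node [].
Proof.
  split.
  - intros [_ Hh]; destruct t as [[|c l]]; [reflexivity |].
    change (Nat.max (S (height c)) (height (Node l)) = 0) in Hh; lia.
  - intros ->; simpl; auto.
Qed.

Lemma alpha_height_S t k :
  alpha_tree t /\ height t = S k <->
  exists c r, t = graft c r /\
              (alpha_tree c /\ height c = k) /\ (alpha_tree r /\ height r <= k).
Proof.
  split.
  - intros [Ha Hh]; destruct t as [[|c l]]; [discriminate |].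
    change (Node (c :: l)) with (graft c (Node l)) in Ha, Hh |- *.
    rewrite alpha_graft in Ha; rewrite height_graft in Hh.
    destruct Ha as (Hac & Har & Hle).
    exists c, (Node l); split; [reflexivity | split; split; auto; lia].
  - intros (c & r & -> & [Hac Hc] & [Har Hr]).
    rewrite alpha_graft, height_graft; split; [split; [| split] | ]; auto; lia.
Qed.

Definition enumerates (P : tree -> Prop) (s : list tree) : Prop :=
  NoDup s /\ forall t, In t s <-> P t.

Lemma enumerates_ext (P Q : tree -> Prop) s :
  (forall t, P t <-> Q t) -> enumerates P s -> enumerates Q s.
Proof. intros E [Hs Hin]; split; [exact Hs |]; intros t; rewrite Hin; apply E. Qed.

Lemma enumerates_app (P Q : tree -> Prop) a b :
  enumerates P a -> enumerates Q b -> (forall t, P t -> Q t -> False) ->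
  enumerates (fun t => P t \/ Q t) (a ++ b).
Proof.
  intros [Na Ia] [Nb Ib] Hdisj; split.
  - apply NoDup_app; auto; intros t Ht Ht'; apply (Hdisj t); [apply Ia | apply Ib]; auto.
  - intros t; rewrite in_app_iff, Ia, Ib; tauto.
Qed.

Definition grafts (a b : list tree) : list tree :=
  flat_map (fun c => map (graft c) b) a.

Lemma length_grafts a b : length (grafts a b) = length a * length b.
Proof. apply flat_map_constant_length; intros; apply length_map. Qed.

(* Since grafting is injective, grafting enumerations yields an enumeration. *)
Lemma enumerates_grafts (P Q : tree -> Prop) a b :
  enumerates P a -> enumerates Q b ->
  enumerates (fun t => exists c r, t = graft c r /\ P c /\ Q r) (grafts a b).
Proof.
  intros [Na Ia] [Nb Ib]; split.
  - clear Ia; induction Na as [|c a Hc Na IH]; simpl; [constructor |].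
    apply NoDup_app; auto.
    + apply Injective_map_NoDup; [| exact Nb].
      intros r r' E; apply graft_inj in E; tauto.
    + intros t Ht Ht'; apply in_map_iff in Ht as (r & <- & _).
      apply in_flat_map in Ht' as (c' & Hc' & Ht').
      apply in_map_iff in Ht' as (r' & E & _).
      apply graft_inj in E as [-> _]; contradiction.
  - intros t; unfold grafts; rewrite in_flat_map; split.
    + intros (c & Hc & Ht); apply in_map_iff in Ht as (r & <- & Hr).
      exists c, r; rewrite <- Ia, <- Ib; auto.
    + intros (c & r & -> & Hc & Hr); exists c; rewrite Ia; split; [exact Hc |].
      apply in_map; apply Ib; exact Hr.
Qed.

Fixpoint alpha_lists (k : nat) : list tree * list tree :=
  match k with
  | 0 => ([Node []], [Node []])
  | S k =>
      let (exact, upto) := alpha_lists k in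
      let exact' := grafts exact upto in
      (exact', upto ++ exact')
  end.

Definition alpha_exact (k : nat) : list tree := fst (alpha_lists k).
Definition alpha_upto (k : nat) : list tree := snd (alpha_lists k).

Lemma alpha_exact_S k : alpha_exact (S k) = grafts (alpha_exact k) (alpha_upto k).
Proof. unfold alpha_exact, alpha_upto; simpl; destruct (alpha_lists k); reflexivity. Qed.

Lemma alpha_upto_S k : alpha_upto (S k) = alpha_upto k ++ alpha_exact (S k).
Proof.
  rewrite alpha_exact_S; unfold alpha_exact, alpha_upto; simpl.
  destruct (alpha_lists k); reflexivity.
Qed.

(* Both lists are exact enumerations: the new level is correct by the graft
   decomposition, and it is disjoint from the previous levels by length. *)
Lemma alpha_lists_enumerate k :
  enumerates (fun t => alpha_tree t /\ height t = k) (alpha_exact k) /\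
  enumerates (fun t => alpha_tree t /\ height t <= k) (alpha_upto k).
Proof.
  induction k as [|k [IHexact IHupto]].
  - assert (Hleaf : enumerates (fun t => alpha_tree t /\ height t = 0) [Node []]).
    { split; [repeat constructor; simpl; tauto |].
      intros t; rewrite alpha_height_0; simpl; intuition. }
    split; [exact Hleaf |].
    eapply enumerates_ext; [| exact Hleaf].
    intros t; split; intros [Ha Hh]; split; auto; lia.
  - assert (Hexact : enumerates (fun t => alpha_tree t /\ height t = S k)
                                (alpha_exact (S k))).
    { rewrite alpha_exact_S.
      eapply enumerates_ext; [| exact (enumerates_grafts _ _ _ _ IHexact IHupto)].
      intros t; rewrite alpha_height_S; reflexivity. }
    split; [exact Hexact |].
    rewrite alpha_upto_S.
    eapply enumerates_ext.
    2: { apply (enumerates_app _ _ _ _ IHupto Hexact); intros t [_ Hle] [_ Heq]; lia. }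
    intros t; split.
    + intros [[Ha Hh] | [Ha Hh]]; split; auto; lia.
    + intros [Ha Hh]; destruct (Nat.eq_dec (height t) (S k)); [right | left];
        split; auto; lia.
Qed.

Definition alpha_count (k : nat) : nat := length (alpha_exact k).

Lemma sum_below_S N n : sum_below N (S n) = sum_below N n + N n.
Proof.
  unfold sum_below; rewrite seq_S, map_app, fold_right_app; simpl.
  induction (map N (seq 0 n)) as [|x l IH]; simpl; lia.
Qed.

Lemma length_alpha_upto k : length (alpha_upto k) = sum_below alpha_count (S k).
Proof.
  induction k as [|k IH]; [reflexivity |].
  rewrite alpha_upto_S, length_app, IH, (sum_below_S _ (S k)); reflexivity.
Qed.

Lemma alpha_count_S k :
  alpha_count (S k) = alpha_count k * sum_below alpha_count (S k).
Proof.
  unfold alpha_count at 1; rewrite alpha_exact_S, length_grafts, length_alpha_upto.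
  reflexivity.
Qed.

Theorem mainTheorem5 :
  exists N : nat -> nat,
    (forall k, exists s, enumerates_alpha k s /\ length s = N k) /\
    N 0 = 1 /\
    (forall k, 1 <= k -> N k = N (k - 1) * sum_below N k) /\
    N 1 = 1 /\ N 2 = 2 /\ N 3 = 8 /\ N 4 = 96.
Proof.
  exists alpha_count; split; [| split; [reflexivity | split]].
  - intros k; exists (alpha_exact k); split; [| reflexivity].
    apply alpha_lists_enumerate.
  - intros [|k] Hk; [lia |].
    rewrite alpha_count_S; simpl (S k - 1); rewrite Nat.sub_0_r; reflexivity.
  - vm_compute; repeat split.
Qed.
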